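(* Let $G$ be a finitely generated group. If there exists an element $x\in G$ whose normal closure in $G$ is abelian and of finite index in $G$, then there exists a finite symmetric generating set $X$ for $G$ with respect to which the geodesic growth of $G$ is polynomial, i.e. there exist $c,d\in\mathbb{N}$ with $\Gamma_{G,X}(n)\le c\,n^d$ for all $n\in\mathbb{N}$.
   Context: For a group $G$ with a finite symmetric generating set $X$ (symmetric meaning $x\in X\Rightarrow x^{-1}\in X$), a word over $X$ is a geodesic if its length equals the word length (with respect to $X$) of the group element it represents. The geodesic growth function $\Gamma_{G,X}(n)$ is the number of geodesic words of length at most $n$, i.e. the number of geodesics of length at most $n$ starting at $1$ in the Cayley graph of $G$ with respect to $X$. *)

From Stdlib Require Import ClassicalEpsilon.
From mathcomp Require Import all_boot.
From Stdlib Require List.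
Set Implicit Arguments. Unset Strict Implicit. Unset Printing Implicit Defensive.

Section GroupDefs.
Variables (G : Type) (mul : G -> G -> G) (one : G) (inv : G -> G).

Record group_axioms : Prop := GroupAxioms {
  mulA : forall a b c, mul a (mul b c) = mul (mul a b) c;
  mul1g : forall a, mul one a = a;
  mulg1 : forall a, mul a one = a;
  mulVg : forall a, mul (inv a) a = one;
  mulgV : forall a, mul a (inv a) = one }.

Definition gprod (w : seq G) : G := foldr mul one w.

Definition in_subgroup_gen (S : G -> Prop) (g : G) : Prop :=
  exists w : seq G, (forall y, List.In y w -> S y \/ S (inv y)) /\ g = gprod w.

Definition finitely_generated : Prop :=
  exists S : seq G, forall g, in_subgroup_gen (fun y => List.In y S) g.

Definition normal_closure (x : G) : G -> Prop :=
  in_subgroup_gen (fun y => exists h, y = mul (inv h) (mul x h)).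

Definition abelian_subset (N : G -> Prop) : Prop :=
  forall a b, N a -> N b -> mul a b = mul b a.

Definition finite_index (N : G -> Prop) : Prop :=
  exists T : seq G, forall g, exists t, List.In t T /\ N (mul (inv t) g).

Definition symmetric_gen_set (k : nat) (X : 'I_k -> G) : Prop :=
  injective X /\
  (forall i, exists j, X j = inv (X i)) /\
  (forall g, exists w : seq 'I_k, g = gprod (map X w)).

Definition geodesic (k : nat) (X : 'I_k -> G) (w : seq 'I_k) : Prop :=
  forall w' : seq 'I_k, gprod (map X w') = gprod (map X w) -> size w <= size w'.

Definition decide (P : Prop) : bool :=
  if excluded_middle_informative P then true else false.

Definition geodesic_growth (k : nat) (X : 'I_k -> G) (n : nat) : nat :=
  \sum_(j < n.+1) #|[pred t : j.-tuple 'I_k | decide (geodesic X (tval t))]|.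

End GroupDefs.

(** Let N be the normal closure of x and R a finite set of coset representatives of N.
  Every g factors as (prod l) * s with s in R and l a word in the finitely many conjugates
  of x and x^-1 by R and R^-1; the least length of such an l is a cost of g.  Right
  multiplication by a fixed element raises the cost by a bounded amount L, and by x^M or
  x^-M by at most M.  Conversely, as N is abelian, prod l regroups into powers of its
  distinct letters, so once x^M and x^-M are generators an element of cost c has word
  length at most c/M + B.  Take M = L + 1 and add x^M, x^-M to a symmetric finite
  generating set: a geodesic with m letters other than x^(+-M) has cost at most
  M (n - m) + (M - 1) m, hence length at most n - m/M + B, so m <= M B.  As x^M and x^-M
  are never adjacent in a geodesic, geodesics consist of at most 2 M B + 1 runs of equal
  letters, and words of length n with boundedly many runs are polynomially many. *)

From HB Require Import structures.
From Pilot Require Import Defs.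
From mathcomp Require Import all_boot zify.
From mathcomp Require boolp.
From Stdlib Require Import ClassicalEpsilon.
Set Implicit Arguments. Unset Strict Implicit. Unset Printing Implicit Defensive.

Lemma InP (T : eqType) (a : T) (s : seq T) : reflect (List.In a s) (a \in s).
Proof.
elim: s => [|b s IHs] /=; first by right.
by rewrite in_cons; apply: (iffP orP) => [[/eqP->|/IHs]|[->|/IHs]]; auto.
Qed.

Lemma decideP (P : Prop) : reflect P (decide P).
Proof. by rewrite /decide; case: excluded_middle_informative => h; constructor. Qed.

Lemma exists_uniform_bound (T : eqType) (s : seq T) (P : T -> nat -> Prop) :
    (forall a m n, m <= n -> P a m -> P a n) ->
    {in s, forall a, exists n, P a n} ->
  exists n, {in s, forall a, P a n}.
Proof.
move=> P_mono; elim: s => [|a s IHs] Ps; first by exists 0.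
have [m Pa] := Ps a (mem_head a s).
have [n Ps'] := IHs (fun b bs => Ps b (mem_behead (s := a :: s) bs)).
exists (maxn m n) => b; rewrite in_cons => /predU1P [->|bs].
  exact: P_mono (leq_maxl m n) Pa.
exact: P_mono (leq_maxr m n) (Ps' b bs).
Qed.

Lemma sumn_count_mem_undup (T : eqType) (l : seq T) :
  sumn [seq count_mem e l | e <- undup l] = size l.
Proof.
rewrite -(perm_size (perm_count_undup l)) size_flatten /shape -map_comp.
by congr sumn; apply: eq_map => e /=; rewrite size_nseq.
Qed.

Section RunLengthEncoding.
Variable A : eqType.

Fixpoint rle_from (a : A) (n : nat) (w : seq A) : seq (A * nat) :=
  if w is b :: w' then
    if b == a then rle_from a n.+1 w' else (a, n) :: rle_from b 1 w'
  else [:: (a, n)].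

Definition rle (w : seq A) : seq (A * nat) :=
  if w is a :: w' then rle_from a 1 w' else [::].

Definition unrle (bs : seq (A * nat)) : seq A := flatten [seq nseq p.2 p.1 | p <- bs].

Lemma unrle_cons p bs : unrle (p :: bs) = nseq p.2 p.1 ++ unrle bs.
Proof. by []. Qed.

Lemma unrle_cat bs cs : unrle (bs ++ cs) = unrle bs ++ unrle cs.
Proof. by rewrite /unrle map_cat flatten_cat. Qed.

Lemma unrle_from a n w : unrle (rle_from a n w) = nseq n a ++ w.
Proof.
elim: w a n => [|b w IHw] a n /=; first by rewrite /unrle /= cats0.
case: eqP => [->|_]; last by rewrite unrle_cons IHw.
by rewrite IHw; elim: n {IHw} => //= n ->.
Qed.

Lemma rleK w : unrle (rle w) = w.
Proof. by case: w => // a w; rewrite /= unrle_from. Qed.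

Lemma rle_from_run_le a n w : all (fun p => p.2 <= n + size w) (rle_from a n w).
Proof.
elim: w a n => [|b w IHw] a n /=; first by rewrite addn0 leqnn.
case: eqP => _ /=.
  by apply: sub_all (IHw a n.+1) => p; rewrite addSnnS.
rewrite leq_addr; apply: sub_all (IHw b 1) => p /= /leq_trans; apply; lia.
Qed.

Lemma rle_run_le w : all (fun p => p.2 <= size w) (rle w).
Proof. by case: w => //= a w; apply: rle_from_run_le. Qed.

Variable z : pred A.

Lemma size_rle_from_le a n w :
    path [rel u v | z u && z v ==> (u == v)] a w ->
  size (rle_from a n w) + ~~ z a <= (2 * count (predC z) (a :: w)).+1.
Proof.
elim: w a n => [|b w IHw] a n /=; first by case: (z a).
case/andP=> zab /(IHw b) IHb; case: eqP => [eba|nba] /=.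
  by move: (IHb n.+1); rewrite eba; simpl; case: (z a); lia.
have {}zab : ~~ (z a && z b).
  by apply: contraL zab => ->; apply/eqP => eab; apply: nba.
by move: (IHb 1) zab; simpl; case: (z a); case: (z b); lia.
Qed.

Lemma size_rle_le w :
    sorted [rel u v | z u && z v ==> (u == v)] w ->
  size (rle w) <= (2 * count (predC z) w).+1.
Proof.
by case: w => //= a w /(size_rle_from_le 1); apply/leq_trans/leq_addr.
Qed.

End RunLengthEncoding.

Lemma card_rle_le (A : finType) (D j : nat) :
  0 < #|A| -> #|[pred t : j.-tuple A | size (rle t) <= D]| <= (#|A| * j.+1) ^ D.
Proof.
case/card_gt0P=> a0 _.
(* such a word decodes D (letter, run length) pairs, padded with empty runs *)
pose dec (d : D.-tuple (A * 'I_j.+1)) := unrle [seq (p.1, val p.2) | p <- d].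
rewrite cardE -(size_map val) -(card_ord j.+1) -card_prod -card_tuple cardE -(size_map dec).
apply: uniq_leq_size; first by rewrite (map_inj_uniq val_inj) enum_uniq.
move=> _ /mapP [t + ->]; rewrite mem_enum inE => rle_t.
pose bs := [seq (p.1, inord p.2 : 'I_j.+1) | p <- rle t] ++ nseq (D - size (rle t)) (a0, ord0).
have size_bs : size bs == D by rewrite size_cat size_map size_nseq subnKC.
apply/mapP; exists (Tuple size_bs); first by rewrite mem_enum.
have unrle_pad : unrle (nseq (D - size (rle t)) (a0, 0)) = [::].
  by rewrite /unrle map_nseq; elim: (D - _).
rewrite /dec /= map_cat unrle_cat map_nseq unrle_pad cats0 -map_comp map_id_in ?rleK //.
move=> p /(allP (rle_run_le t)); rewrite size_tuple /= => p_le.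
by rewrite inordK // -surjective_pairing.
Qed.

Lemma geodesic_growth_le_rle (G : Type) (mul : G -> G -> G) (one : G) (k D : nat)
    (X : 'I_k -> G) :
    0 < k -> (forall w, geodesic mul one X w -> size (rle w) <= D) ->
  forall n, 0 < n -> geodesic_growth mul one X n <= 2 * (2 * k) ^ D * n ^ D.+1.
Proof.
move=> k_gt0 geoD n n_gt0.
apply: (@leq_trans (\sum_(j < n.+1) (2 * k * n) ^ D)).
  apply: leq_sum => j _.
  apply: (@leq_trans #|[pred t : j.-tuple 'I_k | size (rle t) <= D]|).
    by apply: subset_leq_card; apply/subsetP => t /decideP /geoD.
  apply: leq_trans (card_rle_le _ _ _) _; rewrite card_ord //.
  by case: D {geoD} => // D; rewrite leq_exp2r //; have := ltn_ord j; nia.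
by rewrite sum_nat_const card_ord !expnMn expnS; nia.
Qed.

Local Open Scope group_scope.

Section GroupProducts.
Variable gT : groupType.
Implicit Types (a y : gT) (s l : seq gT).

Lemma gprodE s : gprod *%g 1 s = \prod_(y <- s) y.
Proof. exact: foldrE. Qed.

Lemma prod_nseq n a : \prod_(y <- nseq n a) y = a ^+ n.
Proof. by rewrite big_nseq iter_mulg_1. Qed.

Lemma perm_prod_commute s1 s2 :
  {in s1 &, forall a b, commute a b} -> perm_eq s1 s2 ->
  \prod_(y <- s1) y = \prod_(y <- s2) y.
Proof.
elim: s1 s2 => [|a s1 IHs] s2 s1C eq12; first by move: eq12; rewrite perm_sym => /perm_nilP ->.
have s2a : a \in s2 by rewrite -(perm_mem eq12) mem_head.
move: eq12; case/splitPr: s2a => u v eq12.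
have {}eq12 : perm_eq s1 (u ++ v).
  by rewrite -(perm_cons a) (permPl eq12) (perm_catCA u [:: a] v).
have au : commute a (\prod_(y <- u) y).
  rewrite big_seq; apply: commute_prod => y yu; apply: s1C; first exact: mem_head.
  by rewrite in_cons (perm_mem eq12) mem_cat yu orbT.
rewrite big_cons big_cat big_cons /= mulgA -au -mulgA -big_cat (IHs _ _ eq12) //.
by move=> b c bs1 cs1; apply: s1C; rewrite in_cons ?bs1 ?cs1 orbT.
Qed.

Lemma prod_count_mem l :
  {in l &, forall a b, commute a b} ->
  \prod_(y <- l) y = \prod_(e <- undup l) e ^+ count_mem e l.
Proof.
move=> lC; have l_perm : perm_eq l (flatten [seq nseq (count_mem e l) e | e <- undup l]).
  by rewrite perm_sym perm_count_undup.
rewrite (perm_prod_commute lC l_perm).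
by rewrite big_flatten big_map; apply: eq_bigr => e _; apply: prod_nseq.
Qed.

Lemma mem_subgroup_gen (S : gT -> Prop) a : S a -> in_subgroup_gen *%g 1 inv S a.
Proof. by move=> Sa; exists [:: a]; split => [y [<-|[]]|]; [left | rewrite /= mulg1]. Qed.

Lemma subgroup_genV (S : gT -> Prop) a :
  in_subgroup_gen *%g 1 inv S a -> in_subgroup_gen *%g 1 inv S a^-1.
Proof.
case=> w [wS ->]; exists (map inv (rev w)); split.
  move=> y /List.in_map_iff [b [<- /InP]]; rewrite mem_rev => /InP /wS; rewrite invgK.
  by case; [right | left].
by rewrite !gprodE big_map prodgV revK.
Qed.

End GroupProducts.

Section Geodesics.
Variables (gT : groupType) (k : nat) (X : 'I_k -> gT).

Lemma gprod_map w : gprod *%g 1 (map X w) = \prod_(i <- w) X i.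
Proof. by rewrite gprodE big_map. Qed.

Lemma geodesic_suffix u v : geodesic *%g 1 X (u ++ v) -> geodesic *%g 1 X v.
Proof.
move=> geo w'; rewrite !gprod_map => ew'; have := geo (u ++ w').
by rewrite !gprod_map !big_cat /= ew' !size_cat leq_add2l; apply.
Qed.

Lemma geodesic_sorted w :
  geodesic *%g 1 X w -> sorted [rel i j | X i * X j != 1] w.
Proof.
elim: w => // i [|j w] IHw //= geo; apply/andP; split; last first.
  by apply: IHw; apply: (geodesic_suffix (u := [:: i])).
apply/eqP => Xij1; have := geo w; rewrite !gprod_map !big_cons mulgA Xij1 mul1g.
by move=> /(_ erefl) /=; lia.
Qed.

Hypothesis X_gen : forall g, exists w, g = \prod_(i <- w) X i.

Lemma conj_expg_word (a v : gT) (M : nat) (j : 'I_k) :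
    0 < M -> X j = a ^+ M ->
  exists B, forall c, exists2 w, \prod_(i <- w) X i = (a ^ v) ^+ c & (M * size w <= c + M * B).
Proof.
move=> M_gt0 Xj; have [wv ev] := X_gen v; have [wv' ev'] := X_gen v^-1.
have [Br wr_bound] : exists Br, {in iota 0 M, forall r,
    exists2 w, \prod_(i <- w) X i = (a ^ v) ^+ r & size w <= Br}.
  apply: exists_uniform_bound => [r m n mn [w ew wm]|r _].
    by exists w => //; apply: leq_trans wm mn.
  by have [w ew] := X_gen ((a ^ v) ^+ r); exists (size w), w.
exists (size wv' + size wv + Br) => c.
have cM : c %% M \in iota 0 M by rewrite mem_iota ltn_pmod.
have [wr er wrB] := wr_bound _ cM.
exists (wv' ++ nseq (c %/ M) j ++ wv ++ wr).
  rewrite !big_cat /= -ev' -ev er big_nseq iter_mulg_1 Xj -expgnA.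
  have -> : (a ^ v) ^+ c = (a ^+ (M * (c %/ M))) ^ v * (a ^ v) ^+ (c %% M).
    by rewrite {1}(divn_eq c M) mulnC expgnDr conjXg.
  by rewrite [a ^+ _ ^ v]conjgE !mulgA.
have := leq_divM c M; rewrite !size_cat size_nseq; nia.
Qed.

Lemma prod_expg_word (M B : nat) (E : seq gT) :
    {in E, forall e c, exists2 w, \prod_(i <- w) X i = e ^+ c & (M * size w <= c + M * B)} ->
  forall (es : seq gT) (f : gT -> nat), {subset es <= E} ->
  exists2 w, \prod_(i <- w) X i = \prod_(e <- es) e ^+ f e
           & (M * size w <= sumn [seq f e | e <- es] + M * B * size es).
Proof.
move=> E_word; elim=> [|e es IHes] f esE; first by exists [::]; rewrite ?big_nil ?muln0.
have [w1 ew1 w1B] := E_word e (esE e (mem_head e es)) (f e).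
have [w2 ew2 w2B] := IHes f (fun b bs => esE b (mem_behead (s := e :: es) bs)).
exists (w1 ++ w2); first by rewrite big_cat big_cons ew1 ew2.
by move: w1B w2B; rewrite size_cat /=; lia.
Qed.

End Geodesics.

Lemma geodesic_count_le (gT : groupType) (k : nat) (X : 'I_k -> gT) (z : pred 'I_k)
    (M B : nat) (cost : gT -> nat -> Prop) :
    0 < M -> cost 1 0 ->
    (forall g c i, cost g c -> cost (g * X i) (c + if z i then M else M.-1)) ->
    (forall g c, cost g c ->
       exists2 w, \prod_(i <- w) X i = g & M * size w <= c + M * B) ->
  forall w, geodesic *%g 1 X w -> count (predC z) w <= M * B.
Proof.
move=> M_gt0 cost1 cost_step cost_word.
have cost_prod w : cost (\prod_(i <- w) X i) (M * count z w + M.-1 * count (predC z) w).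
  elim/last_ind: w => [|w i IHw]; first by rewrite big_nil !muln0.
  suff -> : (M * count z (rcons w i) + M.-1 * count (predC z) (rcons w i) =
             M * count z w + M.-1 * count (predC z) w + if z i then M else M.-1).
    by rewrite -cats1 big_cat big_seq1; apply: cost_step.
  by rewrite -cats1 !count_cat /=; case: (z i) => /=; lia.
move=> w geo; have [w' ew' size_w'] := cost_word _ _ (cost_prod w).
have := geo w'; rewrite !gprod_map ew' => /(_ erefl) size_w.
by have := count_predC z w; nia.
Qed.

Section AbelianNormalClosure.
Variables (gT : groupType) (x : gT) (T : seq gT).
Local Notation N := (normal_closure *%g 1 inv x).
Hypothesis N_abelian : abelian_subset *%g N.
Hypothesis T_cover : forall g, exists t, List.In t T /\ N (t^-1 * g).

Definition coset_reps : seq gT := 1 :: map inv T.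
Definition conjugators : seq gT := coset_reps ++ map inv coset_reps.
Definition x_conjugates : seq gT :=
  [seq x ^ v | v <- conjugators] ++ [seq x^-1 ^ v | v <- conjugators].

Definition cost_le (g : gT) (c : nat) : Prop :=
  exists l s, [/\ {subset l <= x_conjugates}, size l <= c, s \in coset_reps
                & g = \prod_(e <- l) e * s].

Lemma normal_closure_conj v : N (x ^ v).
Proof. by apply: mem_subgroup_gen; exists v. Qed.

Lemma x_conjugates_normal_closure e : e \in x_conjugates -> N e.
Proof.
rewrite mem_cat => /orP [] /mapP [v _ ->]; first exact: normal_closure_conj.
by rewrite conjVg; apply/subgroup_genV/normal_closure_conj.
Qed.

Lemma coset_decomposition g : exists2 s, s \in coset_reps & N (g / s).
Proof.
have [t [/InP tT Ntg]] := T_cover g^-1; exists t^-1; first by rewrite inE map_f ?orbT.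
by rewrite invgK -[g * t]invgK invgM; apply: subgroup_genV.
Qed.

Lemma conj_x_coset_rep h : exists2 s, s \in coset_reps & x ^ h = x ^ s.
Proof.
have [s sR Nhs] := coset_decomposition h; exists s => //.
have Nx : N x by have := normal_closure_conj 1; rewrite conjg1.
have xn : commute x (h / s) by apply: N_abelian.
by rewrite -{1}(mulgVK s h) conjgM; congr (_ ^ s); rewrite conjgE xn mulKg.
Qed.

Lemma normal_closure_prod n :
  N n -> exists2 l, {subset l <= x_conjugates} & n = \prod_(e <- l) e.
Proof.
case=> w [wS ->]; exists w; last exact: gprodE.
have conj_reps h : x ^ h \in [seq x ^ v | v <- conjugators].
  by have [s sR ->] := conj_x_coset_rep h; rewrite map_f // mem_cat sR.
move=> e /InP /wS [[h ->]|[h eh]]; rewrite mem_cat ?conj_reps //.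
have [s sR xhs] := conj_x_coset_rep h.
by rewrite -[e]invgK eh -/(x ^ h) xhs -conjVg map_f ?orbT // mem_cat sR.
Qed.

Lemma cost_le1 : cost_le 1 0.
Proof. by exists [::], 1; split; rewrite ?mem_head ?big_nil ?mulg1. Qed.

Lemma cost_le_mulr (Y : seq gT) :
  exists L, forall g c y, y \in Y -> cost_le g c -> cost_le (g * y) (c + L).
Proof.
have [L repsY] : exists L, {in [seq (s, y) | s <- coset_reps, y <- Y], forall p,
    exists l s, [/\ {subset l <= x_conjugates}, size l <= L, s \in coset_reps
                  & p.1 * p.2 = \prod_(e <- l) e * s]}.
  apply: exists_uniform_bound => [p m n mn [l [s [lE lm sR e]]]|p _].
    by exists l, s; split => //; apply: leq_trans lm mn.
  have [s sR /normal_closure_prod [l lE ep]] := coset_decomposition (p.1 * p.2).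
  by exists (size l), l, s; split => //; rewrite -ep mulgVK.
exists L => g c y yY [l [s [lE lc sR ->]]].
have [l' [s' [l'E l'L s'R e]]] := repsY (s, y) (allpairs_f pair sR yY).
exists (l ++ l'), s'; split => //; last by rewrite -mulgA e big_cat mulgA.
  by move=> a; rewrite mem_cat => /orP [/lE|/l'E].
by rewrite size_cat leq_add.
Qed.

Lemma cost_le_mul_expg a M g c :
  a \in [:: x; x^-1] -> cost_le g c -> cost_le (g * a ^+ M) (c + M).
Proof.
move=> ax [l [s [lE lc sR ->]]]; exists (l ++ nseq M (a ^ s^-1)), s; split => //.
- move=> e; rewrite mem_cat => /orP [/lE //|/nseqP [-> _]].
  have sV : s^-1 \in conjugators by rewrite mem_cat map_f ?orbT.
  by case/predU1P: ax => [|/predU1P [|//]] ->; rewrite mem_cat map_f ?orbT.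
- by rewrite size_cat size_nseq leq_add2r.
by rewrite -mulgA [s * _]conjgCV conjXg big_cat prod_nseq !mulgA.
Qed.

Section WordLength.
Variables (k : nat) (X : 'I_k -> gT) (M : nat) (jp jm : 'I_k).
Hypotheses (X_gen : forall g, exists w, g = \prod_(i <- w) X i) (M_gt0 : 0 < M).
Hypotheses (X_jp : X jp = x ^+ M) (X_jm : X jm = x^-1 ^+ M).

Lemma cost_le_word : exists B, forall g c, cost_le g c ->
  exists2 w, \prod_(i <- w) X i = g & (M * size w <= c + M * B).
Proof.
have [B0 conj_words] : exists B0, {in x_conjugates, forall e c,
    exists2 w, \prod_(i <- w) X i = e ^+ c & (M * size w <= c + M * B0)}.
  apply: exists_uniform_bound => [e m n mn + c|e].
    by move=> /(_ c) [w ew wm]; exists w => //; apply: leq_trans wm _; rewrite leq_add2l leq_mul2l mn orbT.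
  rewrite mem_cat => /orP [] /mapP [v _ ->].
    exact: conj_expg_word X_gen _ v _ _ M_gt0 X_jp.
  exact: conj_expg_word X_gen _ v _ _ M_gt0 X_jm.
have [B1 rep_words] : exists B1, {in coset_reps, forall s,
    exists2 w, \prod_(i <- w) X i = s & size w <= B1}.
  apply: exists_uniform_bound => [s m n mn [w ew wm]|s _].
    by exists w => //; apply: leq_trans wm mn.
  by have [w ew] := X_gen s; exists (size w), w.
exists (B0 * size x_conjugates + B1) => g c [l [s [lE lc sR ->]]].
have undup_lE : {subset undup l <= x_conjugates} by move=> e; rewrite mem_undup => /lE.
have [w1 ew1 w1B] := prod_expg_word conj_words (fun e => count_mem e l) undup_lE.
have [w2 ew2 w2B] := rep_words s sR.
exists (w1 ++ w2).
  rewrite big_cat ew1 ew2 -prod_count_mem // => a b /lE + /lE.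
  by move=> /x_conjugates_normal_closure Na /x_conjugates_normal_closure Nb; apply: N_abelian.
have := leq_mul (leqnn (M * B0)) (uniq_leq_size (undup_uniq l) undup_lE).
have := leq_mul (leqnn M) w2B.
move: w1B; rewrite sumn_count_mem_undup size_cat.
set nu := size (undup l); set nE := size x_conjugates; lia.
Qed.

End WordLength.
End AbelianNormalClosure.

Section GeneratingSets.
Variable gT : groupType.

Lemma symmetric_gen_set_seq (Y : seq gT) :
    uniq Y -> {in Y, forall a, a^-1 \in Y} ->
    (forall g, exists2 u, {subset u <= Y} & g = \prod_(a <- u) a) ->
  symmetric_gen_set *%g 1 inv (fun i : 'I_(size Y) => Y`_i).
Proof.
move=> Y_uniq Y_sym Y_gen; split; [|split].
- by move=> i j /eqP; rewrite nth_uniq // => /eqP /val_inj.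
- move=> i; have := Y_sym _ (mem_nth 1 (ltn_ord i)); rewrite -index_mem => iY.
  by exists (Ordinal iY); rewrite /= nth_index // -index_mem.
move=> g; have [u uY ->] := Y_gen g.
suff [w ->] : exists w : seq 'I_(size Y), \prod_(a <- u) a = \prod_(i <- w) Y`_i.
  by exists w; rewrite gprod_map.
elim: u uY => [|a u IHu] uY; first by exists [::]; rewrite !big_nil.
have aY : index a Y < size Y by rewrite index_mem uY ?mem_head.
rewrite big_cons.
have [w ->] := IHu (fun b bu => uY b (mem_behead (s := a :: u) bu)).
by exists (Ordinal aY :: w); rewrite !big_cons /= nth_index // -index_mem.
Qed.

Lemma symmetric_gen_set_adjoin (Y : seq gT) (y : gT) :
    {in Y, forall a, a^-1 \in Y} ->
    (forall g, exists2 u, {subset u <= Y} & g = \prod_(a <- u) a) ->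
  exists k (X : 'I_k -> gT) (jp jm : 'I_k),
    [/\ symmetric_gen_set *%g 1 inv X, X jp = y, X jm = y^-1
      & forall i, X i \in [:: y, y^-1 & Y]].
Proof.
move=> Y_sym Y_gen; pose XL := undup [:: y, y^-1 & Y].
have XL_sym : {in XL, forall a, a^-1 \in XL}.
  move=> a; rewrite !mem_undup !inE => /or3P [] /=.
  - by move=> /eqP ->; rewrite eqxx orbT.
  - by move=> /eqP ->; rewrite invgK eqxx.
  by move=> /Y_sym ->; rewrite !orbT.
have XL_gen g : exists2 u, {subset u <= XL} & g = \prod_(a <- u) a.
  by have [u uY ->] := Y_gen g; exists u => // a /uY aY; rewrite mem_undup !inE aY !orbT.
have XLi a : a \in XL -> exists j : 'I_(size XL), XL`_j = a.
  by rewrite -index_mem => aXL; exists (Ordinal aXL); rewrite nth_index // -index_mem.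
have [jp XLjp] : exists j : 'I_(size XL), XL`_j = y.
  by apply: XLi; rewrite mem_undup mem_head.
have [jm XLjm] : exists j : 'I_(size XL), XL`_j = y^-1.
  by apply: XLi; rewrite mem_undup !inE eqxx orbT.
exists (size XL), (fun i => XL`_i), jp, jm; split => //.
  exact: symmetric_gen_set_seq (undup_uniq _) XL_sym XL_gen.
by move=> i; rewrite -mem_undup mem_nth.
Qed.

End GeneratingSets.

Lemma geodesic_rle_bounded (gT : groupType) (x : gT) :
    finitely_generated *%g 1 (@inv gT) ->
    abelian_subset *%g (normal_closure *%g 1 inv x) ->
    finite_index *%g inv (normal_closure *%g 1 inv x) ->
  exists k (X : 'I_k -> gT) D, [/\ symmetric_gen_set *%g 1 inv X, 0 < k
    & forall w, geodesic *%g 1 X w -> size (rle w) <= D].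
Proof.
case=> S S_gen N_ab [T T_cover]; pose Y := S ++ map inv S.
have [L cost_Y] := cost_le_mulr N_ab T_cover Y.
pose M := L.+1; have M_gt0 : 0 < M by [].
have Y_sym : {in Y, forall a, a^-1 \in Y}.
  by move=> a; rewrite !mem_cat => /orP [aS|/mapP [b bS ->]]; rewrite ?invgK ?bS ?map_f ?orbT.
have Y_gen g : exists2 u, {subset u <= Y} & g = \prod_(a <- u) a.
  have [u [uS ->]] := S_gen g; exists u; last exact: gprodE.
  by move=> a /InP /uS [] /InP aS; rewrite mem_cat ?aS // -[a]invgK map_f ?orbT.
have [k [X [jp [jm [X_sym X_jp X_jm X_letters]]]]] := symmetric_gen_set_adjoin (x ^+ M) Y_sym Y_gen.
have [X_inj [_ X_gen']] := X_sym.
have X_gen g : exists w, g = \prod_(i <- w) X i.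
  by have [w ->] := X_gen' g; exists w; rewrite gprod_map.
rewrite -expVgn in X_jm.
have [B cost_word] := cost_le_word T N_ab X_gen M_gt0 X_jp X_jm.
pose z := [pred i | X i \in [:: x ^+ M; (x ^+ M)^-1]].
have cost_step g c i : cost_le x T g c -> cost_le x T (g * X i) (c + if z i then M else M.-1).
  move=> gc; rewrite /z /=; case: ifP => [|zi]; last first.
    by rewrite !inE in zi; apply: cost_Y gc; move: (X_letters i); rewrite !inE orbA zi.
  rewrite !inE => /orP [] /eqP ->; rewrite -?expVgn; apply: cost_le_mul_expg gc.
    by rewrite mem_head.
  by rewrite !inE eqxx orbT.
have nz_bound := geodesic_count_le M_gt0 (cost_le1 x T) cost_step cost_word.
exists k, X, (2 * (M * B)).+1; split => //; first exact: leq_ltn_trans (leq0n jp) (ltn_ord jp).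
move=> w geo; apply: leq_trans (size_rle_le (z := z) _) _; last first.
  by rewrite ltnS leq_mul2l (nz_bound _ geo).
apply: sub_sorted (geodesic_sorted geo) => i j /= Xij; apply/implyP => /andP [zi zj].
apply/eqP/X_inj; move: zi zj Xij; rewrite !inE.
by case/orP=> /eqP ->; case/orP=> /eqP ->; rewrite ?mulgV ?mulVg ?eqxx.
Qed.

Local Close Scope group_scope.

(* The unused argument lets canonical structure inference recover the operations. *)
Definition axiom_group (G : Type) (mul : G -> G -> G) (one : G) (inv : G -> G)
  of group_axioms mul one inv : Type := G.

Section AxiomGroup.
Variables (G : Type) (mul : G -> G -> G) (one : G) (inv : G -> G).
Variable HG : group_axioms mul one inv.
HB.instance Definition _ := boolp.gen_eqMixin (axiom_group HG).
HB.instance Definition _ := boolp.gen_choiceMixin (axiom_group HG).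
HB.instance Definition _ := isGroup.Build (axiom_group HG)
  (Defs.mulA HG) (Defs.mul1g HG) (Defs.mulg1 HG) (Defs.mulVg HG) (Defs.mulgV HG).
End AxiomGroup.

Theorem mainTheorem1 (G : Type) (mul : G -> G -> G) (one : G) (inv : G -> G)
  (HG : group_axioms mul one inv)
  (Hfg : finitely_generated mul one inv)
  (x : G)
  (Hab : abelian_subset mul (normal_closure mul one inv x))
  (Hfi : finite_index mul inv (normal_closure mul one inv x)) :
  exists (k : nat) (X : 'I_k -> G),
    symmetric_gen_set mul one inv X /\
    exists c d : nat, forall n : nat, 1 <= n ->
      geodesic_growth mul one X n <= c * n ^ d.
Proof.
have [k [X [D [X_sym k_gt0 geoD]]]] := @geodesic_rle_bounded (axiom_group HG) x Hfg Hab Hfi.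
exists k, X; split => //; exists (2 * (2 * k) ^ D), D.+1.
exact: geodesic_growth_le_rle.
Qed.
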